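(* Let $\varphi$ be a SaSTL formula (as defined in the context), let $\omega,\omega'$ be spatio-temporal signals over the same $\mathbb{T}$, $L$ and $X$, and let $t\in\mathbb{T}$, $l\in L$. Write $\|\omega-\omega'\|_\infty=\sup_{t_0\in\mathbb{T},\,l_0\in L,\,x\in X}|\pi_x(\omega)[t_0,l_0]-\pi_x(\omega')[t_0,l_0]|$. If $(\omega,t,l)\models\varphi$ and $\|\omega-\omega'\|_\infty<\rho(\varphi,\omega,t,l)$, then $(\omega',t,l)\models\varphi$.
   Context: Time domain $\mathbb{T}=\mathbb{R}_{\ge 0}$. $L$ is a finite nonempty set of locations. $G=(L,E,\eta)$ is a weighted undirected graph with edge weights $\eta:E\to\mathbb{R}_{\ge0}$; the distance $d(l,l')$ is the minimum, over all paths $\sigma$ between $l$ and $l'$, of $\sum_{e\in\sigma}\eta(e)$ (and $+\infty$ if there is no path). $X=\{x_1,\dots,x_n\}$ is a set of signal variables. A spatio-temporal signal is a function $\omega:\mathbb{T}\times L\to\mathbb{R}^n$; $\pi_{x}(\omega)[t,l]\in\mathbb{R}$ denotes its component for variable $x\in X$ at time $t$ and location $l$. $P$ is a finite set of propositions and $\mathcal{L}:L\to 2^P$ a labeling. Location formulas are $\psi::=\top\mid p\mid\neg\psi\mid\psi\vee\psi$ ($p\in P$), with $\mathcal{L}(l)\models\psi$ defined in the usual propositional way. A spatial domain is $\mathcal{D}=([d_1,d_2],\psi)$ with $0\le d_1\le d_2\le+\infty$. For $l\in L$ let $L^l_{\mathcal{D}}=\{l'\in L: d_1\le d(l,l')\le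 d_2,\ \mathcal{L}(l')\models\psi\}$. Standing assumption: for every spatial domain $\mathcal{D}$ occurring in the formula and every $l\in L$, $L^l_{\mathcal{D}}\neq\emptyset$. Let $\alpha^x_{\mathcal{D}}(\omega,t,l)$ be the (nonempty, finite) multiset $\{\pi_x(\omega)[t,l'] : l'\in L^l_{\mathcal{D}}\}$, and for $\mathrm{op}\in\{\max,\min,\mathrm{sum},\mathrm{avg}\}$ let $\mathrm{op}(\cdot)$ be its maximum, minimum, sum, or arithmetic mean. SaSTL syntax: $\varphi::= x>c \mid \neg\varphi\mid \varphi_1\wedge\varphi_2\mid\varphi_1\vee\varphi_2\mid \varphi_1\,\mathcal{U}_I\,\varphi_2\mid \mathcal{A}^{\mathrm{op}}_{\mathcal{D}}x>c\mid \mathcal{C}^{\mathrm{op}}_{\mathcal{D}}\varphi>c$, where $x\in X$, $c\in\mathbb{R}$, $I\subseteq\mathbb{R}_{>0}$ is a nonempty interval, $\mathrm{op}\in\{\max,\min,\mathrm{sum},\mathrm{avg}\}$. For counting formulas $\mathcal{C}^{\mathrm{op}}_{\mathcal{D}}\varphi>c$ it is assumed that $0\le c<1$ if $\mathrm{op}\in\{\max,\min,\mathrm{avg}\}$ and $0\le c<|L^l_{\mathcal{D}}|$ for all $l\in L$ if $\mathrm{op}=\mathrm{sum}$. Boolean semantics: $(\omega,t,l)\models x>c$ iff $\pi_x(\omega)[t,l]>c$; $\neg,\wedge,\vee$ as usual; $(\omega,t,l)\models\varphi_1\mathcal{U}_I\varphi_2$ iff there is $t'\in(t+I)\cap\mathbb{T}$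 with $(\omega,t',l)\models\varphi_2$ and $(\omega,t'',l)\models\varphi_1$ for all $t''\in(t,t')$ (open interval); $(\omega,t,l)\models\mathcal{A}^{\mathrm{op}}_{\mathcal{D}}x>c$ iff $\mathrm{op}(\alpha^x_{\mathcal{D}}(\omega,t,l))>c$; $(\omega,t,l)\models\mathcal{C}^{\mathrm{op}}_{\mathcal{D}}\varphi>c$ iff $\mathrm{op}(\{g(l'):l'\in L^l_{\mathcal{D}}\})>c$ (multiset), where $g(l')=1$ if $(\omega,t,l')\models\varphi$ and $g(l')=0$ otherwise. Quantitative semantics (robustness, values in $\mathbb{R}\cup\{\pm\infty\}$, with $\inf\emptyset=+\infty$): $\rho(x>c,\omega,t,l)=\pi_x(\omega)[t,l]-c$; $\rho(\neg\varphi)=-\rho(\varphi)$; $\rho(\varphi_1\wedge\varphi_2)=\min\{\rho(\varphi_1),\rho(\varphi_2)\}$; $\rho(\varphi_1\vee\varphi_2)=\max\{\rho(\varphi_1),\rho(\varphi_2)\}$ (all at the same $\omega,t,l$); $\rho(\varphi_1\mathcal{U}_I\varphi_2,\omega,t,l)=\sup_{t'\in(t+I)\cap\mathbb{T}}\min\{\rho(\varphi_2,\omega,t',l),\ \inf_{t''\in(t,t')}\rho(\varphi_1,\omega,t'',l)\}$; $\rho(\mathcal{A}^{\mathrm{sum}}_{\mathcal{D}}x>c,\omega,t,l)=\big(\mathrm{sum}(\alpha^x_{\mathcal{D}}(\omega,t,l))-c\big)/|\alpha^x_{\mathcal{D}}(\omega,t,l)|$ and $\rho(\mathcal{A}^{\mathrm{op}}_{\mathcal{D}}x>c,\omega,t,l)=\mathrm{op}(\alpha^x_{\mathcal{D}}(\omega,t,l))-c$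 for $\mathrm{op}\in\{\max,\min,\mathrm{avg}\}$. For counting, let $R=\{\rho(\varphi,\omega,t,l'):l'\in L^l_{\mathcal{D}}\}$ (multiset) and let $\delta(k,R)$ denote the $k$-th largest element of $R$ counted with multiplicity; then $\rho(\mathcal{C}^{\max}_{\mathcal{D}}\varphi>c)=\max R$, $\rho(\mathcal{C}^{\min}_{\mathcal{D}}\varphi>c)=\min R$, $\rho(\mathcal{C}^{\mathrm{sum}}_{\mathcal{D}}\varphi>c)=\delta(\lfloor c\rfloor+1,R)$, $\rho(\mathcal{C}^{\mathrm{avg}}_{\mathcal{D}}\varphi>c)=\delta(\lfloor c\,|L^l_{\mathcal{D}}|\rfloor+1,R)$. *)

From HB Require Import structures.
From mathcomp Require Import all_boot all_order all_algebra.
From mathcomp Require Import all_classical all_reals ereal.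

Set Implicit Arguments. Unset Strict Implicit. Unset Printing Implicit Defensive.
Import Order.TTheory GRing.Theory Num.Theory.
Local Open Scope ring_scope.
Local Open Scope classical_set_scope.

Inductive lform (P : Type) :=
| LTop | LProp of P | LNeg of lform P | LOr of lform P & lform P.
Arguments LTop {P}.

Fixpoint lsat (P : Type) (lp : P -> bool) (psi : lform P) : bool :=
  match psi with
  | LTop => true
  | LProp p => lp p
  | LNeg psi1 => ~~ lsat lp psi1
  | LOr psi1 psi2 => lsat lp psi1 || lsat lp psi2
  end.

Inductive aop := OMax | OMin | OSum | OAvg.

Record sdomain (R : realType) (P : Type) :=
  SDom { dom_d1 : \bar R; dom_d2 : \bar R; dom_psi : lform P }.

Inductive sform (R : realType) (X P : Type) :=
| FAtom of X & R                                      (* x > c *)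
| FNeg of sform R X P
| FAnd of sform R X P & sform R X P
| FOr of sform R X P & sform R X P
| FUntil of interval R & sform R X P & sform R X P
| FAgg of aop & sdomain R P & X & R                   (* A^op_D x > c *)
| FCount of aop & sdomain R P & sform R X P & R.       (* C^op_D phi > c *)

(* max / min of a (nonempty) list; x0 only used for the empty list *)
Definition smax d (T : orderType d) (x0 : T) (s : seq T) : T :=
  foldr Order.max (head x0 s) s.
Definition smin d (T : orderType d) (x0 : T) (s : seq T) : T :=
  foldr Order.min (head x0 s) s.

Section SaSTL.
Variables (R : realType) (L X P : finType).
(* weighted undirected graph: edge relation adj, weights eta (on edges) *)
Variable adj : rel L.
Variable eta : L -> L -> R.
Variable lab : L -> P -> bool.

(* weight of the path x :: p *)
Fixpoint pweight (x : L) (p : seq L) : R :=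
  match p with
  | [::] => 0
  | y :: p' => eta x y + pweight y p'
  end.

Definition gdist (l l' : L) : \bar R :=
  ereal_inf [set (pweight l p)%:E | p in [set p : seq L | path adj l p /\ last l p = l']].

Definition LD (l : L) (D : sdomain R P) : {set L} :=
  [set l' : L | ((dom_d1 D <= gdist l l')%E && (gdist l l' <= dom_d2 D)%E)
                && lsat (lab l') (dom_psi D)].

Definition aggr (op : aop) (s : seq R) : R :=
  match op with
  | OMax => smax 0 s
  | OMin => smin 0 s
  | OSum => \sum_(a <- s) a
  | OAvg => (\sum_(a <- s) a) / (size s)%:R
  end.

(* kth_largest s k = delta(k+1, s): the (k+1)-th largest element (with multiplicity) *)
Definition kth_largest (s : seq (\bar R)) (k : nat) : \bar R :=
  nth (-oo)%E (sort (fun a b => (b <= a)%E) s) k.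

Definition wf_dom (D : sdomain R P) : Prop :=
  (0 <= dom_d1 D)%E /\ (dom_d1 D <= dom_d2 D)%E /\ forall l : L, (0 < #|LD l D|)%N.

Fixpoint wf (f : sform R X P) : Prop :=
  match f with
  | FAtom _ _ => True
  | FNeg f1 => wf f1
  | FAnd f1 f2 => wf f1 /\ wf f2
  | FOr f1 f2 => wf f1 /\ wf f2
  | FUntil J f1 f2 =>
      (exists r : R, r \in J) /\ (forall r : R, r \in J -> 0 < r) /\ wf f1 /\ wf f2
  | FAgg _ D _ _ => wf_dom D
  | FCount op D f1 c =>
      wf_dom D /\ wf f1 /\ 0 <= c /\
      match op with
      | OSum => forall l : L, c < (#|LD l D|)%:R
      | _ => c < 1
      end
  end.

Section Signal.
Variable omega : R -> L -> X -> R.  (* pi_x(omega)[t,l] = omega t l x *)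

Fixpoint sat (f : sform R X P) (t : R) (l : L) : Prop :=
  match f with
  | FAtom x c => c < omega t l x
  | FNeg f1 => ~ sat f1 t l
  | FAnd f1 f2 => sat f1 t l /\ sat f2 t l
  | FOr f1 f2 => sat f1 t l \/ sat f2 t l
  | FUntil J f1 f2 =>
      exists t', (t' - t \in J) /\ 0 <= t' /\ sat f2 t' l /\
                 (forall t'', t < t'' -> t'' < t' -> sat f1 t'' l)
  | FAgg op D x c => c < aggr op [seq omega t l' x | l' <- enum (LD l D)]
  | FCount op D f1 c =>
      c < aggr op [seq (if `[< sat f1 t l' >] then 1 else 0) | l' <- enum (LD l D)]
  end.

Fixpoint rob (f : sform R X P) (t : R) (l : L) : \bar R :=
  match f with
  | FAtom x c => (omega t l x - c)%:E
  | FNeg f1 => (- rob f1 t l)%E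
  | FAnd f1 f2 => Order.min (rob f1 t l) (rob f2 t l)
  | FOr f1 f2 => Order.max (rob f1 t l) (rob f2 t l)
  | FUntil J f1 f2 =>
      ereal_sup [set Order.min (rob f2 t' l)
                   (ereal_inf [set rob f1 t'' l | t'' in [set t'' : R | t < t'' < t']])
                | t' in [set t' : R | (t' - t \in J) /\ 0 <= t']]
  | FAgg op D x c =>
      let s := [seq omega t l' x | l' <- enum (LD l D)] in
      match op with
      | OSum => ((aggr OSum s - c) / (size s)%:R)%:E
      | _ => (aggr op s - c)%:E
      end
  | FCount op D f1 c =>
      let s := [seq rob f1 t l' | l' <- enum (LD l D)] in
      match op with
      | OMax => smax (-oo)%E s
      | OMin => smin (+oo)%E s
      | OSum => kth_largest s `|Num.floor c|%N
      | OAvg => kth_largest s `|Num.floor (c * (#|LD l D|)%:R)|%N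
      end
  end.

End Signal.
End SaSTL.

Definition sup_dist (R : realType) (L X : Type) (omega omega' : R -> L -> X -> R) : \bar R :=
  ereal_sup [set e : \bar R | exists t0 l0 x, 0 <= t0 /\
                 e = (`|omega t0 l0 x - omega' t0 l0 x|)%:E].

(* Fix a real bound del on |omega - omega'| over all times t0 >= 0.  We prove, by
   structural induction on well-formed formulas, the two-sided statement
   [rob_decides]: a robustness value above del forces satisfaction in omega', and
   one below -del forces violation in omega'.
   The theorem follows by choosing a real del between the sup-distance and the
   robustness value. *)

From HB Require Import structures.
From mathcomp Require Import all_boot all_order all_algebra.
From mathcomp Require Import all_classical all_reals ereal.
From mathcomp Require Import lra.

Set Implicit Arguments. Unset Strict Implicit. Unset Printing Implicit Defensive.
Import Order.TTheory GRing.Theory Num.Theory.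
Local Open Scope ring_scope.

Section ListExtrema.
Variables (d : Order.disp_t) (T : orderType d).

Lemma foldr_max_spec (h : T) (s : seq T) :
  foldr Order.max h s \in h :: s /\ {in h :: s, forall a, (a <= foldr Order.max h s)%O}.
Proof.
elim: s => [|b s [IHmem IHub]] /=.
  by split=> [|a]; rewrite ?mem_seq1 ?inE // => /eqP ->.
set m := foldr _ h s in IHmem IHub *; split.
- rewrite /Order.max; case: ifP => _; rewrite !inE ?eqxx ?orbT //.
  by move: IHmem; rewrite inE => /orP [->|->]; rewrite ?orbT.
- move=> a; rewrite !inE => /or3P [/eqP ->|/eqP ->|a_s].
  + by rewrite le_max IHub ?mem_head ?orbT.
  + by rewrite le_max lexx.
  + by rewrite le_max IHub ?inE ?a_s ?orbT.
Qed.

Lemma foldr_min_spec (h : T) (s : seq T) :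
  foldr Order.min h s \in h :: s /\ {in h :: s, forall a, (foldr Order.min h s <= a)%O}.
Proof.
elim: s => [|b s [IHmem IHlb]] /=.
  by split=> [|a]; rewrite ?mem_seq1 ?inE // => /eqP ->.
set m := foldr _ h s in IHmem IHlb *; split.
- rewrite /Order.min; case: ifP => _; rewrite !inE ?eqxx ?orbT //.
  by move: IHmem; rewrite inE => /orP [->|->]; rewrite ?orbT.
- move=> a; rewrite !inE => /or3P [/eqP ->|/eqP ->|a_s].
  + by rewrite ge_min IHlb ?mem_head ?orbT.
  + by rewrite ge_min lexx.
  + by rewrite ge_min IHlb ?inE ?a_s ?orbT.
Qed.

Lemma smax_spec (x0 : T) (s : seq T) : (0 < size s)%N ->
  smax x0 s \in s /\ {in s, forall a, (a <= smax x0 s)%O}.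
Proof.
case: s => [//|b s] _; rewrite /smax [head _ _]/=.
have [hmem hub] := foldr_max_spec b (b :: s).
split=> [|a ha]; last by apply: hub; rewrite inE ha orbT.
by move: hmem; rewrite inE => /orP [/eqP ->|]; rewrite ?mem_head.
Qed.

Lemma smin_spec (x0 : T) (s : seq T) : (0 < size s)%N ->
  smin x0 s \in s /\ {in s, forall a, (smin x0 s <= a)%O}.
Proof.
case: s => [//|b s] _; rewrite /smin [head _ _]/=.
have [hmem hlb] := foldr_min_spec b (b :: s).
split=> [|a ha]; last by apply: hlb; rewrite inE ha orbT.
by move: hmem; rewrite inE => /orP [/eqP ->|]; rewrite ?mem_head.
Qed.
End ListExtrema.

Section KthLargest.
Variable R : realType.
Local Open Scope ereal_scope.

Definition ge_ereal : rel (\bar R) := fun a b => b <= a.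

Lemma ge_ereal_trans : transitive ge_ereal.
Proof. by move=> b a c hba hcb; apply: le_trans hcb hba. Qed.

Lemma sorted_ge_sort (s : seq (\bar R)) : sorted ge_ereal (sort ge_ereal s).
Proof. by apply: sort_sorted => a b; apply: le_total. Qed.

Variable p : pred (\bar R).
Hypothesis p_up : forall a b, a <= b -> p a -> p b.

(* In a decreasing list, if the k-th entry satisfies [p], so do all earlier ones. *)
Lemma sorted_count_gt (ss : seq (\bar R)) k : sorted ge_ereal ss ->
  (k < size ss)%N -> p (nth -oo ss k) -> (k < count p ss)%N.
Proof.
elim: ss k => [//|a ss IH] k /=.
rewrite (path_sortedE ge_ereal_trans) => /andP [a_ge ss_sorted].
case: k => [_ ->//|k k_lt pk].
have pa : p a by apply: p_up pk; apply: (allP a_ge); exact: mem_nth.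
by rewrite pa add1n ltnS IH.
Qed.

(* In a decreasing list, if the k-th entry fails [p], so do all later ones. *)
Lemma sorted_count_le (ss : seq (\bar R)) k : sorted ge_ereal ss ->
  ~~ p (nth -oo ss k) -> (count p ss <= k)%N.
Proof.
elim: ss k => [//|a ss IH] k /=.
rewrite (path_sortedE ge_ereal_trans) => /andP [a_ge ss_sorted].
case: k => [|k] /= npk; last by rewrite -add1n leq_add ?leq_b1 ?IH.
rewrite (negbTE npk) add0n leqNgt -has_count; apply/hasP => -[b b_ss pb].
by move/negP: npk; apply; apply: p_up pb; apply: (allP a_ge).
Qed.

Lemma count_gt_kth (s : seq (\bar R)) k :
  (k < size s)%N -> p (kth_largest s k) -> (k < count p s)%N.
Proof.
move=> k_lt pk; rewrite -(permP (permEl (perm_sort ge_ereal s))).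
by apply: sorted_count_gt; rewrite ?sorted_ge_sort ?size_sort.
Qed.

Lemma count_le_kth (s : seq (\bar R)) k :
  ~~ p (kth_largest s k) -> (count p s <= k)%N.
Proof.
move=> npk; rewrite -(permP (permEl (perm_sort ge_ereal s))).
exact: sorted_count_le (sorted_ge_sort s) npk.
Qed.
End KthLargest.

Lemma size_map_gt0 (T U : Type) (f : T -> U) (s : seq T) :
  (0 < size s)%N -> (0 < size (map f s))%N.
Proof. by rewrite size_map. Qed.

Section RealAggregates.
Variables (R : realType) (T : eqType) (e : seq T) (del : R).
Hypothesis e_ne : (0 < size e)%N.

Lemma smax_le_shift (f g : T -> R) : (forall y, f y <= g y + del) ->
  smax 0 (map f e) <= smax 0 (map g e) + del.
Proof.
move=> fg; have [/mapP [y y_e ->] _] := smax_spec 0 (size_map_gt0 f e_ne).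
have [_ ub] := smax_spec 0 (size_map_gt0 g e_ne).
by apply: le_trans (fg y) _; rewrite lerD2r ub // map_f.
Qed.

Lemma smin_le_shift (f g : T -> R) : (forall y, f y <= g y + del) ->
  smin 0 (map f e) <= smin 0 (map g e) + del.
Proof.
move=> fg; have [/mapP [y y_e ->] _] := smin_spec 0 (size_map_gt0 g e_ne).
have [_ lb] := smin_spec 0 (size_map_gt0 f e_ne).
by apply: le_trans (fg y); rewrite lb // map_f.
Qed.

Lemma sum_le_shift (f g : T -> R) : (forall y, f y <= g y + del) ->
  \sum_(a <- map f e) a <= \sum_(a <- map g e) a + (size e)%:R * del.
Proof.
move=> fg; rewrite !big_map mulr_natl -iter_addr_0 -count_predT -big_const_seq.
by rewrite -big_split; apply: ler_sum => y _; apply: fg.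
Qed.

Lemma aggr_close (op : aop) (f g : T -> R) : (forall y, `|f y - g y| <= del) ->
  `|aggr op (map f e) - aggr op (map g e)|
    <= (if op is OSum then (size e)%:R else 1) * del.
Proof.
move=> fg; have [fg_le gf_le] : (forall y, f y <= g y + del) /\ (forall y, g y <= f y + del).
  by split=> y; have := fg y; rewrite ler_norml => /andP []; lra.
have sum_close : `|\sum_(a <- map f e) a - \sum_(a <- map g e) a| <= (size e)%:R * del.
  by rewrite ler_norml; have := sum_le_shift fg_le; have := sum_le_shift gf_le; lra.
case: op => //=; rewrite mul1r.
- by rewrite ler_norml; have := smax_le_shift fg_le; have := smax_le_shift gf_le; lra.
- by rewrite ler_norml; have := smin_le_shift fg_le; have := smin_le_shift gf_le; lra.
have n_gt0 : 0 < (size e)%:R :> R by rewrite ltr0n.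
by rewrite !size_map -mulrBl normrM normfV normr_nat ler_pdivrMr // mulrC.
Qed.

Lemma aggr_indicator (op : aop) (b : pred T) :
  aggr op (map (fun y => if b y then 1 else 0 : R) e) =
  match op with
  | OMax => (has b e)%:R
  | OMin => (all b e)%:R
  | OSum => (count b e)%:R
  | OAvg => (count b e)%:R / (size e)%:R
  end.
Proof.
set ind := (X in map X e).
have sum_ind : \sum_(a <- map ind e) a = (count b e)%:R.
  by rewrite big_map -big_mkcond -sum1_count natr_sum.
case: op => /=; rewrite ?sum_ind ?size_map //.
- have [/mapP [y y_e ->] ub] := smax_spec 0 (size_map_gt0 ind e_ne).
  case hb: (has b e); last by rewrite /ind (negbTE (hasPn (negbT hb) y y_e)).
  have [z z_e bz] := hasP hb.
  by have := ub _ (map_f ind z_e); rewrite /ind bz; case: (b y) => //=; lra.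
- have [/mapP [y y_e ->] lb] := smin_spec 0 (size_map_gt0 ind e_ne).
  case ab: (all b e); first by rewrite /ind (allP ab y y_e).
  have [z z_e nbz] := allPn (negbT ab).
  by have := lb _ (map_f ind z_e); rewrite /ind (negbTE nbz); case: (b y) => //=; lra.
Qed.
End RealAggregates.

Lemma floor_nat_lt (R : realType) (c : R) (m : nat) : 0 <= c ->
  (`|Num.floor c|%N < m)%N = (c < m%:R).
Proof. by move=> c_ge0; rewrite -ltz_nat gez0_abs ?floor_ge0 // floor_lt_int. Qed.

Section Margins.
Variables (R : realType) (T : eqType) (e : seq T) (r : T -> \bar R) (b : pred T) (del : R).
Hypothesis r_pos : forall y, (del%:E < r y)%E -> b y.
Hypothesis r_neg : forall y, (del%:E < - r y)%E -> ~~ b y.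
Hypothesis e_ne : (0 < size e)%N.
Local Open Scope ereal_scope.

Lemma margin_smax_pos : del%:E < smax -oo (map r e) -> has b e.
Proof.
have [/mapP [y y_e ->] _] := smax_spec -oo (size_map_gt0 r e_ne).
by move=> /r_pos b_y; apply/hasP; exists y.
Qed.

Lemma margin_smax_neg : del%:E < - smax -oo (map r e) -> ~~ has b e.
Proof.
move=> neg; apply/hasPn => y y_e; apply: r_neg; apply: lt_le_trans neg _.
by rewrite leeN2; have [_] := smax_spec -oo (size_map_gt0 r e_ne); apply; exact: map_f.
Qed.

Lemma margin_smin_pos : del%:E < smin +oo (map r e) -> all b e.
Proof.
move=> pos; apply/allP => y y_e; apply: r_pos; apply: lt_le_trans pos _.
by have [_] := smin_spec +oo (size_map_gt0 r e_ne); apply; exact: map_f.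
Qed.

Lemma margin_smin_neg : del%:E < - smin +oo (map r e) -> ~~ all b e.
Proof.
have [/mapP [y y_e ->] _] := smin_spec +oo (size_map_gt0 r e_ne).
by move=> /r_neg nby; apply/allPn; exists y.
Qed.

Lemma margin_kth_pos k : del%:E < kth_largest (map r e) k -> (k < count b e)%N.
Proof.
move=> pos; have k_lt : (k < size (map r e))%N.
  rewrite ltnNge; apply/negP => k_ge; move: pos.
  by rewrite /kth_largest nth_default ?size_sort // ltNge leNye.
have := @count_gt_kth R (fun a => del%:E < a) (fun a c ac pa => lt_le_trans pa ac) _ k k_lt pos.
rewrite count_map => /leq_trans; apply; apply: sub_count => y; exact: r_pos.
Qed.

Lemma margin_kth_neg k : del%:E < - kth_largest (map r e) k -> (count b e <= k)%N.
Proof.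
move=> neg; have npk : ~~ (- del%:E <= kth_largest (map r e) k) by rewrite -ltNge lteNr.
have := @count_le_kth R (fun a => - del%:E <= a) (fun a c ac pa => le_trans pa ac) _ k npk.
rewrite count_map; apply: leq_trans; apply: sub_count => y b_y /=.
by rewrite leNgt; apply: contraL b_y => ry; apply: r_neg; rewrite lteNr.
Qed.
End Margins.

Section Stability.
Variables (R : realType) (L X P : finType) (adj : rel L) (eta : L -> L -> R).
Variables (lab : L -> P -> bool) (omega omega' : R -> L -> X -> R) (del : R).
Hypothesis close : forall t0 l0 x, 0 <= t0 -> `|omega t0 l0 x - omega' t0 l0 x| <= del.

Local Notation rob_w := (rob adj eta lab omega).
Local Notation sat_w' := (sat adj eta lab omega').
Local Open Scope classical_set_scope.

Definition rob_decides (f : sform R X P) (t : R) (l : L) : Prop :=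
  ((del%:E < rob_w f t l)%E -> sat_w' f t l) /\
  ((del%:E < - rob_w f t l)%E -> ~ sat_w' f t l).

Lemma rob_decides_atom x c t l : 0 <= t -> rob_decides (FAtom P x c) t l.
Proof.
move=> t_ge0; have := close l x t_ge0; rewrite ler_norml => /andP [lo hi].
by rewrite /rob_decides /= !lte_fin; split=> margin; lra.
Qed.

(* Negation swaps the two halves of [rob_decides]. *)
Lemma rob_decides_neg f t l : rob_decides f t l -> rob_decides (FNeg f) t l.
Proof. by move=> [pos neg]; rewrite /rob_decides /= oppeK; split=> [/neg|/pos sat_f]. Qed.

Lemma rob_decides_and f1 f2 t l :
  rob_decides f1 t l -> rob_decides f2 t l -> rob_decides (FAnd f1 f2) t l.
Proof.
move=> [pos1 neg1] [pos2 neg2]; rewrite /rob_decides /= oppe_min lt_min lt_max.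
by split=> [/andP [/pos1 ? /pos2 ?]|/orP [/neg1 ?|/neg2 ?] []].
Qed.

Lemma rob_decides_or f1 f2 t l :
  rob_decides f1 t l -> rob_decides f2 t l -> rob_decides (FOr f1 f2) t l.
Proof.
move=> [pos1 neg1] [pos2 neg2]; rewrite /rob_decides /= oppe_max lt_min lt_max.
by split=> [/orP [/pos1|/pos2]|/andP [/neg1 ? /neg2 ?] []]; [left|right|..].
Qed.

(* Until: a witness t' of the sup (resp. a near-infimum) transfers satisfaction
   (resp. violation) at every time involved, all of them nonnegative. *)
Lemma rob_decides_until J f1 f2 t l : 0 <= t ->
  (forall s, 0 <= s -> rob_decides f1 s l) -> (forall s, 0 <= s -> rob_decides f2 s l) ->
  rob_decides (FUntil J f1 f2) t l.
Proof.
move=> t_ge0 dec1 dec2; have later_ge0 s : t < s -> 0 <= s.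
  by move=> /ltW; apply: le_trans.
split=> /=.
- case/ereal_sup_gt => _ [t' [t'_J t'_ge0] <-]; rewrite lt_min => /andP [pos2 pos1].
  exists t'; do 3!split=> //; first exact: (dec2 t' t'_ge0).1.
  move=> s ts st'; apply: (dec1 s (later_ge0 s ts)).1; apply: lt_le_trans pos1 _.
  by apply: ereal_inf_lbound; exists s => //=; rewrite ts st'.
- rewrite lteNr => below [t' [t'_J [t'_ge0 [sat2 sat1]]]].
  suff : (Order.min (rob_w f2 t' l)
           (ereal_inf [set rob_w f1 s l | s in [set s | (t < s < t')%R]]) < - del%:E)%E.
    rewrite gt_min => /orP [below2|/ereal_inf_lt [_ [s /andP [ts st'] <-]] below1].
    + by apply: (dec2 t' t'_ge0).2 sat2; rewrite lteNr.
    + by apply: (dec1 s (later_ge0 s ts)).2 (sat1 s ts st'); rewrite lteNr.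
  by apply: le_lt_trans below; apply: ereal_sup_ubound; exists t'.
Qed.

(* Spatial aggregation: by [aggr_close], the aggregate moves by at most [del]
   (by [size * del] for sums, whose robustness is normalised by the size). *)
Lemma rob_decides_agg op D x c t l : 0 <= t -> wf_dom adj eta lab D ->
  rob_decides (FAgg op D x c) t l.
Proof.
move=> t_ge0 [_ [_ LD_ne]]; set e := enum (LD adj eta lab l D).
have e_ne : (0 < size e)%N by rewrite -cardE.
have n_gt0 : 0 < (size e)%:R :> R by rewrite ltr0n.
have := @aggr_close _ _ e del e_ne op (fun y => omega t y x) (fun y => omega' t y x)
  (fun y => close y x t_ge0).
rewrite /rob_decides ler_norml /= -/e; case: op => /=; rewrite ?size_map => /andP [lo hi];
  rewrite -?EFinN !lte_fin ?mul1r in lo hi *; try by split=> margin; lra.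
by rewrite -mulNr !ltr_pdivlMr // mulrC; split=> margin; lra.
Qed.

(* Spatial counting: the counting quantity of [omega'] is an aggregate of
   indicators, determined by the margins through the [Margins] lemmas. *)
Lemma rob_decides_count op D f c t l : wf adj eta lab (FCount op D f c) ->
  (forall l', rob_decides f t l') -> rob_decides (FCount op D f c) t l.
Proof.
move=> [[_ [_ LD_ne]] [_ [c_ge0 c_bound]]] dec.
set e := enum (LD adj eta lab l D).
have e_ne : (0 < size e)%N by rewrite -cardE.
have n_gt0 : 0 < (size e)%:R :> R by rewrite ltr0n.
pose b y := `[< sat_w' f t y >].
have b_pos y : (del%:E < rob_w f t y)%E -> b y.
  by move=> /(dec y).1 /asboolP.
have b_neg y : (del%:E < - rob_w f t y)%E -> ~~ b y.
  by move=> /(dec y).2 /asboolPn.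
rewrite /rob_decides /= cardE -/e (@aggr_indicator R _ e e_ne op b).
case: op c_bound => /= c_bound.
- split=> [/(margin_smax_pos b_pos e_ne) ->|/(margin_smax_neg b_neg e_ne) /negbTE ->] /=;
    rewrite ?mulr1n; lra.
- split=> [/(margin_smin_pos b_pos e_ne) ->|/(margin_smin_neg b_neg e_ne) /negbTE ->] /=;
    rewrite ?mulr1n; lra.
- rewrite -(floor_nat_lt _ c_ge0); split=> [/(margin_kth_pos b_pos) //|].
  by move=> /(margin_kth_neg b_neg) count_le; rewrite ltnNge count_le.
- have cn_ge0 : 0 <= c * (size e)%:R by rewrite mulr_ge0 // ltW.
  rewrite ltr_pdivlMr // -(floor_nat_lt _ cn_ge0); split=> [/(margin_kth_pos b_pos) //|].
  by move=> /(margin_kth_neg b_neg) count_le; rewrite ltnNge count_le.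
Qed.

Lemma rob_decides_wf f : forall t l, 0 <= t -> wf adj eta lab f -> rob_decides f t l.
Proof.
elim: f => [x c|f IH|f1 IH1 f2 IH2|f1 IH1 f2 IH2|J f1 IH1 f2 IH2|op D x c|op D f IH c]
  t l t_ge0 /= wf_f.
- exact: rob_decides_atom.
- exact: rob_decides_neg (IH t l t_ge0 wf_f).
- by case: wf_f => wf1 wf2; apply: rob_decides_and; [apply: IH1|apply: IH2].
- by case: wf_f => wf1 wf2; apply: rob_decides_or; [apply: IH1|apply: IH2].
- case: wf_f => _ [_ [wf1 wf2]].
  by apply: rob_decides_until => // s s_ge0; [apply: IH1|apply: IH2].
- exact: rob_decides_agg.
- have [_ [wf1 _]] := wf_f.
  by apply: rob_decides_count wf_f _ => l'; apply: IH.
Qed.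
End Stability.

Lemma lte_real_between (R : realType) (a b : \bar R) : (a < b)%E ->
  exists d : R, (a <= d%:E)%E /\ (d%:E < b)%E.
Proof.
case: a => [a| |] ab; first by exists a.
  by move: ab; rewrite ltNge leey.
case: b ab => [b| |] ab; [exists (b - 1)|exists 0|by rewrite ltxx in ab].
  by rewrite lte_fin; split; [exact: leNye|lra].
by split; [exact: leNye|exact: ltry].
Qed.

Lemma sup_dist_ub (R : realType) (L X : Type) (omega omega' : R -> L -> X -> R) t0 l0 x :
  0 <= t0 -> ((`|omega t0 l0 x - omega' t0 l0 x|)%:E <= sup_dist omega omega')%E.
Proof. by move=> t0_ge0; apply: ereal_sup_ubound; exists t0, l0, x. Qed.

Theorem theorem2 (R : realType) (L X P : finType)
  (adj : rel L) (eta : L -> L -> R) (lab : L -> P -> bool)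
  (adj_sym : symmetric adj)
  (eta_sym : forall a b : L, eta a b = eta b a)
  (eta_ge0 : forall a b : L, adj a b -> (0 <= eta a b)%R)
  (phi : sform R X P) (Hwf : wf adj eta lab phi)
  (omega omega' : R -> L -> X -> R) (t : R) (l : L) (Ht : (0 <= t)%R) :
  sat adj eta lab omega phi t l ->
  (sup_dist omega omega' < rob adj eta lab omega phi t l)%E ->
  sat adj eta lab omega' phi t l.
Proof.
move=> _ /lte_real_between [del [dist_le margin]].
have close t0 l0 x : 0 <= t0 -> `|omega t0 l0 x - omega' t0 l0 x| <= del.
  by move=> t0_ge0; rewrite -lee_fin; apply: le_trans dist_le; exact: sup_dist_ub.
exact: (rob_decides_wf close l Ht Hwf).1 margin.
Qed.
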